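(* Let $G=(V,E)$ be a graph with edges ordered $e_1,\dots,e_m$ that has an $f$-MFD blocking set $\{(e_i,F_i)\}_{i=1}^m$. Then for every $S\subseteq V$, the induced subgraph $G[S]$, with its edges ordered as inherited from the ordering of $E$, has $$\Big\{\Big(e_i,\ (F_i\cap V\cap S)\cup\big(F_i\cap E\cap \tbinom{S}{2}\big)\Big)\Big\}_{e_i\in E(G[S])}$$ as an $f$-MFD blocking set.
   Context: For a graph $G=(V,E)$ and $F\subseteq V\cup E$, $G-F$ is obtained by deleting the vertices of $F\cap V$ (with incident edges) and the edges of $F\cap E$. $F$ damages an edge $e$ if $e$ is not an edge of $G-F$. For $v\in V$ let $\deg_G(v,F)=|\{u\in N_G(v): u\in F\text{ or }\{u,v\}\in F\}|$ and $\deg_G(F)=\max_{v\in V\setminus F}\deg_G(v,F)$. Given ordered edges $e_1,\dots,e_m$ with $e_i=\{u_i,v_i\}$, let $G_{<i}=(V,\{e_1,\dots,e_{i-1}\})$. A connectivity blocking set for $G$ is a collection $\{(e_i,F_i)\}_{i=1}^m$ with $F_i\subseteq V\cup E$ such that (1) $F_i$ does not damage $e_i$ and (2) $u_i,v_i$ are disconnected in $G_{<i}-F_i$. It is an $f$-MFD blocking set if moreover $\deg_G(F_i)\le f$ for all $i$. For the induced subgraph these notions are taken with respect to $G[S]$ and its inherited edge order. *)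

From mathcomp Require Import all_boot.
Set Implicit Arguments. Unset Strict Implicit. Unset Printing Implicit Defensive.

(* A graph with an ordered edge list: vertex set gV, edges e_1..e_m listed in
   order in gE; an edge is a 2-element vertex set {u,v}. *)
Record graph (T : finType) := Graph { gV : {set T}; gE : seq {set T} }.

Section Defs.
Variable T : finType.
Implicit Types (G : graph T).

Definition simple_graph G : bool :=
  uniq (gE G) && all (fun e : {set T} => (#|e| == 2) && (e \subset gV G)) (gE G).

Definition edge_set G : {set {set T}} := [set e in gE G].

(* F ⊆ V ∪ E, represented as (F ∩ V, F ∩ E) *)
Definition fault := ({set T} * {set {set T}})%type.

Definition fault_in G (F : fault) : bool :=
  (F.1 \subset gV G) && (F.2 \subset edge_set G).

Definition gdel G (F : fault) : graph T :=
  Graph (gV G :\: F.1) [seq e <- gE G | (e \notin F.2) && [disjoint e & F.1]].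

Definition damages G (F : fault) (e : {set T}) : bool := e \notin gE (gdel G F).

(* G_{<i} for the (0-based) i-th edge: keeps the edges before it *)
Definition gprefix G (i : nat) : graph T := Graph (gV G) (take i (gE G)).

Definition gadj G : rel T :=
  fun x y => [&& x \in gV G, y \in gV G & [set x; y] \in gE G].

Definition gconnected G (u v : T) : bool := connect (gadj G) u v.

Definition nbhd G (v : T) : {set T} := [set u | [set u; v] \in gE G].

Definition degvF G (v : T) (F : fault) : nat :=
  #|[set u in nbhd G v | (u \in F.1) || ([set u; v] \in F.2)]|.

Definition degF G (F : fault) : nat := \max_(v in gV G :\: F.1) degvF G v F.

(* connectivity blocking set, indexed by the edges: B e = F_i for e = e_i *)
Definition conn_blocking G (B : {set T} -> fault) : Prop :=
  forall i, i < size (gE G) ->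
    let e := nth set0 (gE G) i in
    [/\ fault_in G (B e), ~~ damages G (B e) e &
        forall u v, e = [set u; v] ->
          ~~ gconnected (gdel (gprefix G i) (B e)) u v].

Definition mfd_blocking G (f : nat) (B : {set T} -> fault) : Prop :=
  conn_blocking G B /\ (forall e, e \in gE G -> degF G (B e) <= f).

Definition induced G (S : {set T}) : graph T :=
  Graph S [seq e <- gE G | (e : {set T}) \subset S].

Definition restrict_fault G (S : {set T}) (F : fault) : fault :=
  (F.1 :&: gV G :&: S,
   F.2 :&: edge_set G :&: [set e : {set T} | (e \subset S) && (#|e| == 2)]).

End Defs.

From mathcomp Require Import all_boot.

Set Implicit Arguments.
Unset Strict Implicit.
Unset Printing Implicit Defensive.

(* The edges of G[S] preceding e_i in the inherited order are exactly the edges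
   of G_{<i} lying inside S, and on vertices of S and edges inside S the
   restricted fault F_i' contains exactly what F_i does.  Hence G[S]_{<i} - F_i'
   is a subgraph of G_{<i} - F_i, so it cannot connect the ends of e_i, and e_i
   survives in G[S] - F_i' as it does in G - F_i.  Since F_i' is contained in
   F_i and G[S] in G, the degrees deg(v, F_i') can only drop. *)

Lemma take_index_filter (X : eqType) (p : pred X) (x : X) (s : seq X) :
  p x -> take (index x (filter p s)) (filter p s) = filter p (take (index x s) s).
Proof.
move=> px; elim: s => [|a s IHs] //=.
have [->|neq_ax] := eqVneq a x; first by rewrite px /= eqxx.
by rewrite /=; case: (p a); rewrite /= ?(negbTE neq_ax) /= IHs.
Qed.

Section InducedPrefix.

Variables (T : finType) (G : graph T) (S : {set T}).
Hypothesis uniq_edges : uniq (gE G).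

Lemma gprefix_induced i : i < size (gE (induced G S)) ->
  gprefix (induced G S) i =
  induced (gprefix G (index (nth set0 (gE (induced G S)) i) (gE G))) S.
Proof.
move=> lt_i; set e := nth set0 _ i.
have e_sub : (e : {set T}) \subset S.
  by have := mem_nth set0 lt_i; rewrite mem_filter => /andP[].
have i_e : index e (gE (induced G S)) = i.
  by rewrite index_uniq // filter_uniq.
by rewrite /gprefix /induced /= -[in take i _]i_e take_index_filter.
Qed.

End InducedPrefix.

Definition subgraph (T : finType) (H K : graph T) : Prop :=
  gV H \subset gV K /\ {subset gE H <= gE K}.

Lemma gconnected_subgraph (T : finType) (H K : graph T) (u v : T) :
  subgraph H K -> gconnected H u v -> gconnected K u v.
Proof.
move=> [/subsetP sub_V sub_E]; apply: connect_sub => x y /and3P[xH yH xyH].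
by apply: connect1; rewrite /gadj !sub_V ?sub_E.
Qed.

Section RestrictFault.

Variables (T : finType) (G : graph T) (S : {set T}) (F : fault T).
Hypotheses (simpleG : simple_graph G) (sub_SV : S \subset gV G).

Let F' := restrict_fault G S F.

Lemma mem_restrict_fault1 x : x \in S -> (x \in F'.1) = (x \in F.1).
Proof. by move=> xS; rewrite !inE xS (subsetP sub_SV) ?andbT. Qed.

Lemma mem_restrict_fault2 e :
  e \in gE G -> e \subset S -> (e \in F'.2) = (e \in F.2).
Proof.
move=> eG eS; have /andP[/eqP e2 _] := allP (proj2 (andP simpleG)) e eG.
by rewrite !inE eG eS e2 eqxx !andbT.
Qed.

Lemma disjoint_restrict_fault1 (e : {set T}) :
  e \subset S -> [disjoint e & F'.1] = [disjoint e & F.1].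
Proof.
move=> /subsetP eS; rewrite !disjoints_subset.
by apply/subsetP/subsetP => sub x xe; have := sub x xe;
  rewrite !in_setC mem_restrict_fault1 ?eS.
Qed.

Lemma mem_gdel_induced (H : graph T) (e : {set T}) : {subset gE H <= gE G} ->
  (e \in gE (gdel (induced H S) F')) = (e \subset S) && (e \in gE (gdel H F)).
Proof.
move=> sub_HG; rewrite !mem_filter.
have [eS|] := boolP (e \subset S); last by rewrite !andbF.
have [eH|] := boolP (e \in gE H); last by rewrite !andbF.
by rewrite mem_restrict_fault2 ?sub_HG // disjoint_restrict_fault1.
Qed.

Lemma gdel_induced_subgraph (H : graph T) :
  gV H = gV G -> {subset gE H <= gE G} ->
  subgraph (gdel (induced H S) F') (gdel H F).
Proof.
move=> VH sub_HG; split.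
  apply/subsetP => x; rewrite !in_setD VH => /andP[xF xS].
  by rewrite (subsetP sub_SV) // -(mem_restrict_fault1 xS) xF.
by move=> e; rewrite mem_gdel_induced // => /andP[].
Qed.

Lemma fault_in_restrict : fault_in (induced G S) F'.
Proof.
apply/andP; split; first exact: subsetIr.
apply/subsetP => e; rewrite !inE mem_filter.
by case/andP => /andP[_ ->] /andP[-> _].
Qed.

Lemma degF_restrict : degF (induced G S) F' <= degF G F.
Proof.
apply/bigmax_leqP => v vS.
have [/subsetP sub_V _] := gdel_induced_subgraph (erefl _) (fun e eG => eG).
apply: leq_trans (leq_bigmax_cond _ (sub_V v vS)).
apply/subset_leq_card/subsetP => u; rewrite !inE mem_filter.
case/andP => /andP[_ ->] /orP[/andP[/andP[-> _] _]|/andP[/andP[-> _] _]] //.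
by rewrite orbT.
Qed.

End RestrictFault.

Theorem mainTheorem3 (T : finType) (G : graph T) (f : nat)
    (B : {set T} -> fault T) :
  simple_graph G -> mfd_blocking G f B ->
  forall S : {set T}, S \subset gV G ->
    mfd_blocking (induced G S) f (fun e => restrict_fault G S (B e)).
Proof.
move=> simpleG [blockG degG] S sub_SV; split => [i lt_i e | e]; last first.
  rewrite mem_filter => /andP[_ eG].
  exact: leq_trans (degF_restrict _ simpleG sub_SV) (degG e eG).
move: (mem_nth set0 lt_i); rewrite mem_filter => /andP[e_sub eG].
have := blockG (index e (gE G)); rewrite index_mem nth_index //.
case=> // _ not_damaged disconnected; split.
- exact: fault_in_restrict.
- by rewrite /damages mem_gdel_induced // e_sub.
- move=> u v euv; rewrite gprefix_induced ?(proj1 (andP simpleG)) //.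
  apply: contra (disconnected u v euv); apply: gconnected_subgraph.
  by apply: gdel_induced_subgraph => // x; apply: mem_take.
Qed.
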